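(* Let $r_1,r_2,\mu,a_{12},a_{13},a_{21},a_{31},d$ be positive with $r_1>a_{12}$ and $a_{31}>\mu$, let $c>c_*:=2\sqrt{d(a_{31}-\mu)}$ and $\rho=c^2/d$. Consider the vector field on $\mathbb{R}^4$ \[ \dot X_1=X_1\big(r_1(1-X_1)-a_{12}X_2-a_{13}Y\big),\quad \dot X_2=X_2\big(r_2(1-X_2)+a_{21}X_1\big),\quad \dot Y=\rho(Y-Z),\quad \dot Z=Y(-\mu+a_{31}X_1). \] Let $\sigma_1=\frac{\rho+\sqrt{\rho^2-4\rho(a_{31}-\mu)}}{2\rho}$, $\sigma_2=\frac{\rho+\sqrt{\rho^2+4\rho\mu}}{2\rho}$, \[ \Sigma=\Big\{0\le X_1\le1,\ 0\le X_2\le 1+\tfrac{a_{21}}{r_2},\ Y\ge0,\ \sigma_1Y\le Z\le\sigma_2Y\Big\}, \] and \[ P_i=\Big\{0<X_1<1,\ 0<X_2<1+\tfrac{a_{21}}{r_2},\ Y>0,\ Z=\sigma_iY\Big\},\quad i=1,2. \] Then at every point $p\in P_1\cup P_2$ the vector field points to the outside of $\Sigma$.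
   Context: For $c>c_*$ one has $0<\sigma_1<1<\sigma_2$. *)

From Stdlib Require Import Reals.
Open Scope R_scope.

Record pt4 := mkpt { X1 : R; X2 : R; Yc : R; Zc : R }.

Definition padd (p q : pt4) : pt4 :=
  mkpt (X1 p + X1 q) (X2 p + X2 q) (Yc p + Yc q) (Zc p + Zc q).
Definition pscale (t : R) (p : pt4) : pt4 :=
  mkpt (t * X1 p) (t * X2 p) (t * Yc p) (t * Zc p).
Definition dot4 (p q : pt4) : R :=
  X1 p * X1 q + X2 p * X2 q + Yc p * Yc q + Zc p * Zc q.

Definition field (r1 r2 mu a12 a13 a21 a31 rho : R) (p : pt4) : pt4 :=
  mkpt (X1 p * (r1 * (1 - X1 p) - a12 * X2 p - a13 * Yc p))
       (X2 p * (r2 * (1 - X2 p) + a21 * X1 p))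
       (rho * (Yc p - Zc p))
       (Yc p * (- mu + a31 * X1 p)).

Definition sigma1 (rho mu a31 : R) : R :=
  (rho + sqrt (rho ^ 2 - 4 * rho * (a31 - mu))) / (2 * rho).
Definition sigma2 (rho mu : R) : R :=
  (rho + sqrt (rho ^ 2 + 4 * rho * mu)) / (2 * rho).

Definition Sigma (r2 a21 s1 s2 : R) (p : pt4) : Prop :=
  0 <= X1 p <= 1 /\ 0 <= X2 p <= 1 + a21 / r2 /\ 0 <= Yc p /\
  s1 * Yc p <= Zc p <= s2 * Yc p.

Definition Pface (r2 a21 s : R) (p : pt4) : Prop :=
  0 < X1 p < 1 /\ 0 < X2 p < 1 + a21 / r2 /\ 0 < Yc p /\ Zc p = s * Yc p.

(* Outward normals of Sigma on the faces Z = s1 Y (Sigma has Z - s1 Y >= 0)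
   and Z = s2 Y (Sigma has s2 Y - Z >= 0). *)
Definition nout1 (s1 : R) : pt4 := mkpt 0 0 s1 (-1).
Definition nout2 (s2 : R) : pt4 := mkpt 0 0 (- s2) 1.

Definition points_outside (S : pt4 -> Prop) (n F : pt4) (p : pt4) : Prop :=
  0 < dot4 F n /\
  exists eps, 0 < eps /\ forall t, 0 < t < eps -> ~ S (padd p (pscale t F)).

(* On the face Z = s Y the field's component along the normal (0,0,s,-1) is
   Y (mu - a31 X1 - (rho s^2 - rho s)).  The slopes sigma1 and sigma2 are the
   larger roots of rho s^2 - rho s = mu - a31 and rho s^2 - rho s = mu, so the
   outward components are a31 Y (1 - X1) > 0 on P1 and a31 Y X1 > 0 on P2.
   Since Sigma lies in the half-space bounded by each face, a positive outward
   component makes p + t F(p) leave Sigma for every t > 0. *)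
From Stdlib Require Import Reals Lra Psatz.
Open Scope R_scope.

Lemma dot4_padd_pscale (p q n : pt4) (t : R) :
  dot4 (padd p (pscale t q)) n = dot4 p n + t * dot4 q n.
Proof. unfold dot4, padd, pscale; simpl; ring. Qed.

Lemma points_outside_supporting_halfspace (S : pt4 -> Prop) (n F p : pt4) :
  (forall q, S q -> dot4 q n <= dot4 p n) -> 0 < dot4 F n ->
  points_outside S n F p.
Proof.
  intros HS HF; split; [exact HF|].
  exists 1; split; [lra|]; intros t [Ht _] HSq.
  specialize (HS _ HSq); rewrite dot4_padd_pscale in HS.
  assert (0 < t * dot4 F n) by (apply Rmult_lt_0_compat; assumption).
  lra.
Qed.

Section Faces.

Variables (r2 a21 s1 s2 : R).

Lemma Sigma_dot_nout1 (q : pt4) : Sigma r2 a21 s1 s2 q -> dot4 q (nout1 s1) <= 0.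
Proof. intros (_ & _ & _ & Hlo & _); unfold dot4, nout1; simpl; lra. Qed.

Lemma Sigma_dot_nout2 (q : pt4) : Sigma r2 a21 s1 s2 q -> dot4 q (nout2 s2) <= 0.
Proof. intros (_ & _ & _ & _ & Hhi); unfold dot4, nout2; simpl; lra. Qed.

Lemma Pface_dot_nout1 (p : pt4) : Pface r2 a21 s1 p -> dot4 p (nout1 s1) = 0.
Proof. intros (_ & _ & _ & HZ); unfold dot4, nout1; simpl; rewrite HZ; ring. Qed.

Lemma Pface_dot_nout2 (p : pt4) : Pface r2 a21 s2 p -> dot4 p (nout2 s2) = 0.
Proof. intros (_ & _ & _ & HZ); unfold dot4, nout2; simpl; rewrite HZ; ring. Qed.

End Faces.

Section NormalComponent.

Variables (r1 r2 mu a12 a13 a21 a31 rho s : R) (p : pt4).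
Hypothesis face : Zc p = s * Yc p.

Lemma field_dot_nout1 :
  rho * s * s - rho * s = mu - a31 ->
  dot4 (field r1 r2 mu a12 a13 a21 a31 rho p) (nout1 s) = a31 * Yc p * (1 - X1 p).
Proof.
  intros Hs; unfold dot4, field, nout1; simpl; rewrite face.
  transitivity (Yc p * (mu - a31 * X1 p - (rho * s * s - rho * s))); [ring|].
  rewrite Hs; ring.
Qed.

Lemma field_dot_nout2 :
  rho * s * s - rho * s = mu ->
  dot4 (field r1 r2 mu a12 a13 a21 a31 rho p) (nout2 s) = a31 * Yc p * X1 p.
Proof.
  intros Hs; unfold dot4, field, nout2; simpl; rewrite face.
  transitivity (Yc p * (a31 * X1 p - mu + (rho * s * s - rho * s))); [ring|].
  rewrite Hs; ring.
Qed.

End NormalComponent.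

Lemma larger_root_quadratic (rho D : R) : 0 < rho -> 0 <= D ->
  let s := (rho + sqrt D) / (2 * rho) in
  rho * s * s - rho * s = (D - rho ^ 2) / (4 * rho).
Proof.
  intros Hr HD s; unfold s.
  pose proof (sqrt_sqrt D HD) as Hsq; set (q := sqrt D) in *.
  rewrite <- Hsq; field; lra.
Qed.

Lemma sigma1_root (rho mu a31 : R) : 0 < rho -> 4 * (a31 - mu) < rho ->
  let s := sigma1 rho mu a31 in rho * s * s - rho * s = mu - a31.
Proof.
  intros Hr Hrho; unfold sigma1; rewrite larger_root_quadratic by nra.
  field; lra.
Qed.

Lemma sigma2_root (rho mu : R) : 0 < rho -> 0 < mu ->
  let s := sigma2 rho mu in rho * s * s - rho * s = mu.
Proof.
  intros Hr Hmu; unfold sigma2; rewrite larger_root_quadratic by nra.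
  field; lra.
Qed.

Lemma lt_sq_div_of_gt_twice_sqrt (c d k : R) : 0 < d -> 0 <= k ->
  c > 2 * sqrt (d * k) -> 4 * k < c ^ 2 / d.
Proof.
  intros Hd Hk Hc.
  pose proof (sqrt_pos (d * k)) as Hpos.
  pose proof (sqrt_sqrt (d * k) ltac:(nra)) as Hsq.
  apply Rmult_lt_reg_r with d; [exact Hd|].
  replace (c ^ 2 / d * d) with (c ^ 2) by (field; lra).
  nra.
Qed.

Theorem lemma5 (r1 r2 mu a12 a13 a21 a31 d c : R) :
  0 < r1 -> 0 < r2 -> 0 < mu -> 0 < a12 -> 0 < a13 -> 0 < a21 -> 0 < a31 -> 0 < d ->
  r1 > a12 -> a31 > mu ->
  c > 2 * sqrt (d * (a31 - mu)) ->
  let rho := c ^ 2 / d in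
  let s1 := sigma1 rho mu a31 in
  let s2 := sigma2 rho mu in
  let F := field r1 r2 mu a12 a13 a21 a31 rho in
  (forall p, Pface r2 a21 s1 p ->
     points_outside (Sigma r2 a21 s1 s2) (nout1 s1) (F p) p) /\
  (forall p, Pface r2 a21 s2 p ->
     points_outside (Sigma r2 a21 s1 s2) (nout2 s2) (F p) p).
Proof.
  intros _ _ Hmu _ _ _ Ha31 Hd _ Hmu31 Hc rho s1 s2 F.
  assert (Hrho : 4 * (a31 - mu) < rho) by (apply lt_sq_div_of_gt_twice_sqrt; lra).
  assert (Hrho_pos : 0 < rho) by lra.
  pose proof (sigma1_root _ _ _ Hrho_pos Hrho) as Hroot1.
  pose proof (sigma2_root _ _ Hrho_pos Hmu) as Hroot2.
  split; intros p Hp; pose proof Hp as (HX1 & _ & HY & HZ);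
    apply points_outside_supporting_halfspace.
  - intros q Hq; rewrite (Pface_dot_nout1 _ _ _ _ Hp).
    exact (Sigma_dot_nout1 _ _ _ _ _ Hq).
  - unfold F; rewrite field_dot_nout1 by assumption.
    apply Rmult_lt_0_compat; [apply Rmult_lt_0_compat|]; lra.
  - intros q Hq; rewrite (Pface_dot_nout2 _ _ _ _ Hp).
    exact (Sigma_dot_nout2 _ _ _ _ _ Hq).
  - unfold F; rewrite field_dot_nout2 by assumption.
    apply Rmult_lt_0_compat; [apply Rmult_lt_0_compat|]; lra.
Qed.
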